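(* Let $b>a>0$, $x\in\mathbb{R}^d$, and let $K$ be a cube containing $B(x,a)$ with $K\cap\partial B(x,b)\ne\emptyset$. Let $\mathcal{A},\mathcal{B}$ be finite subsets of $\mathbb{R}^d$ with $\mathcal{A}\subset B(x,a)$ and $\mathcal{B}\subset K\setminus B(x,a)$. If $\mathcal{B}$ contains a $K$-wall around $B(x,a)$ in $B(x,b)$, then $$|M(\mathcal{A}\cup\mathcal{B})-M(\mathcal{B})|\le c|\mathcal{A}|\,b$$ for a constant $c$ depending only on $d$. If no such wall exists, then $|M(\mathcal{A}\cup\mathcal{B})-M(\mathcal{B})|\le c|\mathcal{A}|\,\mathrm{diameter}(K)$.
   Context: For a finite set $X\subset\mathbb{R}^d$, $M(X)$ is the total length of a minimal spanning tree of the complete graph on $X$ with Euclidean edge lengths. $B(x,r)=x+[-r,r]^d$; $S(p,r)$ is the closed Euclidean ball of radius $r$ centered at $p$; $d(\cdot,\cdot)$ is Euclidean distance. Definition (wall): for $b>a>0$, $x\in\mathbb{R}^d$ and a cube $K\supset B(x,a)$ with $K\cap\partial B(x,b)\ne\emptyset$, a set $\mathfrak{W}\subset\mathbb{R}^d$ contains a $K$-wall around $B(x,a)$ in $B(x,b)$ if for every $p_1\in\partial B(x,a)$ and every $p_2\in K\cap\partial B(x,b)$ the set $K\cap\mathfrak{W}\cap S(p_1,\tfrac34 d(p_1,p_2))\cap S(p_2,\tfrac34 d(p_1,p_2))\cap(B(x,b)\setminus B(x,a))$ is nonempty. *)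

From HB Require Import structures.
From mathcomp Require Import all_boot all_order all_algebra.
From mathcomp Require Import finmap.
From mathcomp Require Import all_classical all_reals.
Set Implicit Arguments. Unset Strict Implicit. Unset Printing Implicit Defensive.
Import Order.TTheory GRing.Theory Num.Theory.
Local Open Scope ring_scope.
Local Open Scope classical_set_scope.

Section Geometry.
Variables (R : realType) (d : nat).
Local Notation V := 'rV[R]_d.

Definition edist (p q : V) : R := Num.sqrt (\sum_(i < d) (p ord0 i - q ord0 i) ^+ 2).

(* sup-norm distance; B(x,r) = x + [-r,r]^d = { p | supdist x p <= r } *)
Definition supdist (x p : V) : R := \big[Num.max/0]_(i < d) `|p ord0 i - x ord0 i|.

Definition cube (x : V) (r : R) : set V := [set p | supdist x p <= r].
Definition cube_bd (x : V) (r : R) : set V := [set p | supdist x p = r].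
Definition eball (p : V) (r : R) : set V := [set z | edist p z <= r].

Definition diameter (K : set V) : R :=
  sup [set r | exists p q, K p /\ K q /\ r = edist p q].

Definition contains_wall (W : set V) (K : set V) (x : V) (a b : R) : Prop :=
  forall p1 p2, cube_bd x a p1 -> (K `&` cube_bd x b) p2 ->
    (K `&` W `&` eball p1 (3/4 * edist p1 p2) `&` eball p2 (3/4 * edist p1 p2)
       `&` (cube x b `\` cube x a)) !=set0.

(* E (ordered pairs, each undirected edge listed once) is a spanning tree of
   the complete graph on X: edges join distinct points of X, the graph (X,E)
   is connected and has #|X| - 1 edges. *)
Definition spanning_tree (X : {fset V}) (E : {fset V * V}) : Prop :=
  [/\ (forall e, e \in E -> [/\ e.1 \in X, e.2 \in X, e.1 != e.2 & (e.2, e.1) \notin E]),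
      (forall p q, p \in X -> q \in X -> exists s : seq V,
          path (fun u v => ((u, v) \in E) || ((v, u) \in E)) p s /\ last p s = q)
    & #|` E| = (#|` X|).-1]%fset.

Definition tree_length (E : {fset V * V}) : R := \sum_(e <- E) edist e.1 e.2.

Definition MST (X : {fset V}) : R :=
  inf [set w | exists E, spanning_tree X E /\ w = tree_length E].

End Geometry.

(* Adding a point p to a finite set Y changes M by at most (N + 1) L, where L bounds the
   distance from p to Y and the distances between the MST neighbours of p: adding p
   costs one edge of length at most L, and deleting p from a minimal tree leaves at most
   N pieces, which a star of edges of length at most L reconnects.  Here N only depends
   on d, because two MST neighbours of p are seen from p under an angle of at least 60
   degrees.  Inserting the points of A one by one gives |A| (N + 1) L.  Without a wall,
   L is the diameter of K.  With a wall, L is of order b: an MST edge leaving B(x,b) from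
   B(x,a) would cross the wall, and the cycle property rules that out. *)

From HB Require Import structures.
From mathcomp Require Import all_boot all_order all_algebra.
From mathcomp Require Import finmap.
From mathcomp Require Import all_classical all_reals all_analysis.
From mathcomp Require Import ring lra zify.
Import Order.TTheory GRing.Theory Num.Theory.
Import numFieldTopology.Exports numFieldNormedType.Exports.
Local Open Scope ring_scope.
Local Open Scope classical_set_scope.
Set Implicit Arguments.
Unset Strict Implicit.

Lemma cauchy_schwarz (R : realFieldType) n (u v : 'I_n -> R) :
  (\sum_i u i * v i) ^+ 2 <= (\sum_i u i ^+ 2) * (\sum_i v i ^+ 2).
Proof.
(* Lagrange's identity *)
have : 0 <= \sum_i \sum_j (u i * v j - u j * v i) ^+ 2.
  by apply: sumr_ge0 => i _; apply: sumr_ge0 => j _; apply: sqr_ge0.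
have -> : \sum_i \sum_j (u i * v j - u j * v i) ^+ 2 =
    \sum_i \sum_j (u i ^+ 2 * v j ^+ 2) + \sum_i \sum_j (v i ^+ 2 * u j ^+ 2)
    - 2 * \sum_i \sum_j ((u i * v i) * (u j * v j)).
  rewrite mulr_sumr -big_split -sumrB /=; apply: eq_bigr => i _.
  by rewrite mulr_sumr -big_split -sumrB /=; apply: eq_bigr => j _; ring.
rewrite -!big_distrlr /= expr2 (mulrC (\sum_i v i ^+ 2)); lra.
Qed.

Section Euclid.
Variables (R : realType) (d : nat).
Local Notation V := 'rV[R]_d.
Implicit Types (p q r u x y : V) (s t : R).

Lemma edist_ge0 p q : 0 <= edist p q.
Proof. exact: sqrtr_ge0. Qed.

Lemma edist_sqr p q : edist p q ^+ 2 = \sum_(i < d) (p ord0 i - q ord0 i) ^+ 2.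
Proof. by rewrite sqr_sqrtr //; apply: sumr_ge0 => i _; apply: sqr_ge0. Qed.

Lemma edistC p q : edist p q = edist q p.
Proof. by congr Num.sqrt; apply: eq_bigr => i _; rewrite -sqrrN opprB. Qed.

Lemma edist_eq0 p q : (edist p q == 0) = (p == q).
Proof.
apply/idP/eqP => [|->]; last first.
  by rewrite /edist big1 ?sqrtr0 // => i _; rewrite subrr expr0n.
rewrite -sqrf_eq0 edist_sqr => /eqP /psumr_eq0P h.
apply/rowP => j; apply/eqP; rewrite -subr_eq0 -sqrf_eq0; apply/eqP.
by apply: h => // i _; apply: sqr_ge0.
Qed.

Lemma edist_xx p : edist p p = 0.
Proof. by apply/eqP; rewrite edist_eq0. Qed.

Lemma edist_gt0 p q : p != q -> 0 < edist p q.
Proof. by rewrite lt0r edist_ge0 andbT edist_eq0. Qed.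

Lemma edist_triangle p q r : edist p r <= edist p q + edist q r.
Proof.
pose C := \sum_(i < d) (p ord0 i - q ord0 i) * (q ord0 i - r ord0 i).
have expand : edist p r ^+ 2 = edist p q ^+ 2 + 2 * C + edist q r ^+ 2.
  by rewrite !edist_sqr /C mulr_sumr -!big_split /=; apply: eq_bigr => i _; ring.
have C_le : C <= edist p q * edist q r.
  apply: le_trans (ler_norm C) _; rewrite -sqrtr_sqr /edist -sqrtrM.
    by rewrite ler_sqrt ?cauchy_schwarz // mulr_ge0 // sumr_ge0 // => i _; apply: sqr_ge0.
  by apply: sumr_ge0 => i _; apply: sqr_ge0.
rewrite -ler_sqr ?nnegrE ?addr_ge0 ?edist_ge0 // expand sqrrD; lra.
Qed.

Lemma coord_le_edist p q i : `|p ord0 i - q ord0 i| <= edist p q.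
Proof.
rewrite -ler_sqr ?nnegrE ?edist_ge0 // real_normK ?num_real // edist_sqr.
by rewrite (bigD1 i) //= lerDl sumr_ge0 // => j _; apply: sqr_ge0.
Qed.

Lemma edist_le_coord p q m : 0 <= m -> (forall i, `|p ord0 i - q ord0 i| <= m) ->
  edist p q <= d%:R * m.
Proof.
move=> m0 hm; rewrite -ler_sqr ?nnegrE ?edist_ge0 ?mulr_ge0 // edist_sqr.
apply: le_trans (_ : \sum_(i < d) m ^+ 2 <= _).
  by apply: ler_sum => i _; rewrite -real_normK ?num_real // lerXn2r ?nnegrE.
rewrite sumr_const card_ord exprMn -[_ *+ d]mulr_natl.
have d_le : (d%:R : R) <= d%:R ^+ 2 by rewrite -natrX ler_nat; nia.
exact: (ler_wpM2r (sqr_ge0 m)) d_le.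
Qed.

Lemma supdist_ge0 x p : 0 <= supdist x p.
Proof. by rewrite /supdist; elim/big_ind: _ => // s t hs ht; rewrite le_max hs. Qed.

Lemma supdist_le x p s : 0 <= s ->
  (supdist x p <= s) <-> (forall i, `|p ord0 i - x ord0 i| <= s).
Proof.
move=> s0; split => [h i|h]; last by apply/bigmax_leP; split.
exact: le_trans (le_bigmax _ _ i) h.
Qed.

Lemma supdist_xx x : supdist x x = 0.
Proof.
apply/le_anti; rewrite supdist_ge0 andbT.
by apply/(supdist_le _ _ (lexx 0)) => i; rewrite subrr normr0.
Qed.

Lemma cube_coord y s p i : cube y s p -> `|p ord0 i - y ord0 i| <= s.
Proof. by move=> h; apply: (supdist_le _ _ (le_trans (supdist_ge0 y p) h)).1. Qed.

Lemma cube_edist y s p q : cube y s p -> cube y s q -> edist p q <= d%:R * (2 * s).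
Proof.
move=> hp hq; have s0 : 0 <= s := le_trans (supdist_ge0 y p) hp.
apply: edist_le_coord => [|i]; first by rewrite mulr_ge0.
have -> : p ord0 i - q ord0 i = (p ord0 i - y ord0 i) - (q ord0 i - y ord0 i) by ring.
apply: le_trans (ler_normB _ _) _.
by have := cube_coord i hp; have := cube_coord i hq; lra.
Qed.

Lemma edist_le_diameter y s p q : cube y s p -> cube y s q ->
  edist p q <= diameter (cube y s).
Proof.
move=> hp hq; apply: ub_le_sup; last by exists p, q.
by exists (d%:R * (2 * s)) => r [p' [q' [hp' [hq' ->]]]]; apply: cube_edist hq'.
Qed.

Lemma diameter_ge0 y s p : cube y s p -> 0 <= diameter (cube y s).
Proof.
by move=> hp; apply: le_trans (edist_le_diameter hp hp); rewrite edist_xx.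
Qed.

Definition seg p u t : V := p + t *: (u - p).

Lemma seg_coord p u t i : seg p u t ord0 i = p ord0 i + t * (u ord0 i - p ord0 i).
Proof. by rewrite !mxE. Qed.

Lemma seg0 p u : seg p u 0 = p.
Proof. by rewrite /seg scale0r addr0. Qed.

Lemma seg1 p u : seg p u 1 = u.
Proof. by rewrite /seg scale1r addrC subrK. Qed.

Lemma edist_seg p u t t' : edist (seg p u t) (seg p u t') = `|t - t'| * edist p u.
Proof.
rewrite /edist (eq_bigr (fun i => (t - t') ^+ 2 * (p ord0 i - u ord0 i) ^+ 2)).
  by rewrite -mulr_sumr sqrtrM ?sqr_ge0 // sqrtr_sqr.
by move=> i _; rewrite !seg_coord; ring.
Qed.

Lemma cube_seg y s p u t : cube y s p -> cube y s u -> 0 <= t <= 1 ->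
  cube y s (seg p u t).
Proof.
move=> hp hu /andP[t0 t1]; have s0 : 0 <= s := le_trans (supdist_ge0 y p) hp.
apply/supdist_le => // i; rewrite seg_coord.
have -> : p ord0 i + t * (u ord0 i - p ord0 i) - y ord0 i =
   (1 - t) * (p ord0 i - y ord0 i) + t * (u ord0 i - y ord0 i) by ring.
apply: le_trans (ler_normD _ _) _.
rewrite !normrM (ger0_norm t0) ger0_norm ?subr_ge0 //.
have := ler_wpM2l t0 (cube_coord i hu).
have t1' : 0 <= 1 - t by rewrite subr_ge0.
have := ler_wpM2l t1' (cube_coord i hp); lra.
Qed.

End Euclid.

Lemma continuous_bigmax (R : realType) n (F : 'I_n -> R -> R) :
  (forall i, continuous (F i)) -> continuous (fun t => \big[Num.max/0]_(i < n) F i t).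
Proof.
elim: n F => [|n IH] F hF.
  by under eq_fun => ? do rewrite big_ord0; apply: cst_continuous.
under eq_fun => t do rewrite big_ord_recl /=.
by apply: max_fun_continuous; [apply: hF | apply: IH => i; apply: hF].
Qed.

Section Segment.
Variables (R : realType) (d : nat).
Local Notation V := 'rV[R]_d.
Implicit Types (p u x : V).

Lemma continuous_supdist_seg x p u : continuous (fun t : R => supdist x (seg p u t)).
Proof.
have -> : (fun t => supdist x (seg p u t)) = (fun t => \big[Num.max/0]_(i < d)
    `|(p ord0 i - x ord0 i) + t * (u ord0 i - p ord0 i)|).
  by apply: funext => t; apply: eq_bigr => i _; rewrite seg_coord addrAC.
apply: continuous_bigmax => i t; apply: cvg_norm; apply: cvgD; first exact: cvg_cst.
by apply: cvgM; [exact: cvg_id | exact: cvg_cst].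
Qed.

Lemma seg_cross_cube_bd x p u (r t0 t1 : R) : t0 <= t1 ->
  supdist x (seg p u t0) <= r <= supdist x (seg p u t1) ->
  exists t, [/\ t0 <= t, t <= t1 & cube_bd x r (seg p u t)].
Proof.
move=> t01 /andP[h0 h1].
have [|t] := @IVT R _ t0 t1 r t01 (continuous_subspaceT (@continuous_supdist_seg x p u)).
  by rewrite ge_min h0 le_max h1 orbT.
by rewrite in_itv /= => /andP[? ?] ht; exists t.
Qed.

End Segment.

Section Reachability.
Variable T : Type.
Implicit Types (r : rel T) (p q w : T).

Definition reach r p q := exists s, path r p s /\ last p s = q.

Lemma reach_refl r p : reach r p p.
Proof. by exists [::]. Qed.

Lemma reach_edge r p q : r p q -> reach r p q.
Proof. by move=> h; exists [:: q]; rewrite /= h. Qed.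

Lemma reach_trans r p q w : reach r p q -> reach r q w -> reach r p w.
Proof.
move=> [s1 [h1 <-]] [s2 [h2 <-]]; exists (s1 ++ s2).
by rewrite cat_path last_cat h1 h2.
Qed.

Lemma reach_sub r r' p q : subrel r r' -> reach r p q -> reach r' p q.
Proof. by move=> sr [s [h l]]; exists s; split => //; apply: sub_path h. Qed.

Lemma reach_sym r p q : symmetric r -> reach r p q -> reach r q p.
Proof.
move=> rC [s [h <-]]; elim: s p h => [|v s IH] p /=; first by move=> _; apply: reach_refl.
case/andP=> hpv /IH h; apply: reach_trans h _.
by apply: reach_edge; rewrite rC.
Qed.

Lemma path_crossing r (P : pred T) p s : path r p s -> P p -> ~~ P (last p s) ->
  exists u v, [/\ r u v, P u & ~~ P v].
Proof.
elim: s p => [|v s IH] p /=; first by move=> _ ->.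
case/andP=> hpv hs Pp; case Pv: (P v); first exact: IH.
by move=> _; exists p, v; rewrite Pv.
Qed.

End Reachability.

Lemma reach_before (T : eqType) (r : rel T) p y s : path r y s -> last y s = p -> y != p ->
  exists u, r u p /\ reach [rel a b | [&& r a b, a != p & b != p]] y u.
Proof.
elim: s y => [|v s IH] y /=; first by move=> _ -> /eqP.
case/andP=> hyv hs lst yp; have [vp|vp] := eqVneq v p.
  by exists y; split; [rewrite -vp | apply: reach_refl].
have [u [up hu]] := IH v hs lst vp; exists u; split => //.
by apply: reach_trans hu; apply: reach_edge; rewrite /= hyv yp vp.
Qed.

Lemma exists_argmin_seq (R : realDomainType) (T : eqType) (f : T -> R) (s : seq T) x0 :
  x0 \in s -> exists2 m, m \in s & forall x, x \in s -> f m <= f x.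
Proof.
elim: s x0 => [//|a [|b s] IH] x0 _.
  by exists a; rewrite ?inE // => x; rewrite inE => /eqP ->.
have [m ms hm] := IH b (mem_head _ _).
have [le_am|lt_ma] := leP (f a) (f m).
  exists a; first exact: mem_head.
  by move=> x; rewrite inE => /predU1P[-> //|/hm]; apply: le_trans.
exists m; first by rewrite inE ms orbT.
by move=> x; rewrite inE => /predU1P[->|/hm //]; apply: ltW.
Qed.

Section SpanningTree.
Variables (R : realType) (d : nat).
Local Notation V := 'rV[R]_d.
Local Open Scope fset_scope.
Local Open Scope ring_scope.
Implicit Types (p q u v w : V) (X Y S : {fset V}) (E T : {fset V * V}).

Definition adj E : rel V := fun u v => ((u, v) \in E) || ((v, u) \in E).

Lemma adjC E : symmetric (adj E).
Proof. by move=> u v; rewrite /adj orbC. Qed.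

Lemma adj_sub E E' : E `<=` E' -> subrel (adj E) (adj E').
Proof. by move=> /fsubsetP sE u v; rewrite /adj => /orP[] /sE ->; rewrite ?orbT. Qed.

Lemma adj_fset1U e E : adj (e |` E) e.1 e.2.
Proof. by rewrite /adj in_fset1U -surjective_pairing eqxx. Qed.

Definition edges_in X E := forall e, e \in E -> e.1 \in X /\ e.2 \in X.

Definition connected_on X E := forall p q, p \in X -> q \in X -> reach (adj E) p q.

Lemma connected_on_hub X E c :
  (forall z, z \in X -> reach (adj E) z c) -> connected_on X E.
Proof.
move=> h p q hp hq; apply: reach_trans (h p hp) _.
by apply: reach_sym (h q hq); apply: adjC.
Qed.

Lemma spanning_tree_edges_in X T : spanning_tree X T -> edges_in X T.
Proof. by case=> h _ _ e /h []. Qed.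

Lemma spanning_tree_connected X T : spanning_tree X T -> connected_on X T.
Proof. by case. Qed.

Lemma spanning_tree_adj X T p u : spanning_tree X T -> adj T p u -> p \in X /\ u \in X.
Proof.
by move=> /spanning_tree_edges_in hT /orP[] /hT [] => [-> ->|-> ->].
Qed.

Lemma spanning_tree_adj_neq X T p u : spanning_tree X T -> adj T p u -> p != u.
Proof. by case=> hT _ _ /orP[] /hT [_ _ + _] => //=; rewrite eq_sym. Qed.

Lemma notin_spanning_tree X T e : spanning_tree X T ->
  (e.1 \notin X) || (e.2 \notin X) -> e \notin T.
Proof.
move=> /spanning_tree_edges_in hT; apply: contraL => /hT [-> ->] //.
Qed.

Lemma spanning_tree_extend S T u v e : spanning_tree S T -> u \in S -> v \notin S ->
  e = (u, v) \/ e = (v, u) -> spanning_tree (v |` S) (e |` T).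
Proof.
move=> tr uS vS he; have uv : u != v by apply: contraNneq vS => <-.
have [e1 e2 e12 ev] : [/\ e.1 \in v |` S, e.2 \in v |` S, e.1 != e.2 &
    (e.1 \notin S) || (e.2 \notin S)].
  by case: he => ->; rewrite !in_fset1U eqxx uS ?orbT ?vS // eq_sym.
have eT : e \notin T := notin_spanning_tree tr ev.
case: (tr) => hT cT nT; split.
- move=> f; rewrite in_fset1U => /orP[/eqP ->|fT].
    rewrite e1 e2 e12 in_fset1U negb_or; split=> //.
    have -> : ((e.2, e.1) == e) = false.
      by case: (e) e12 => a b /=; rewrite xpair_eqE eq_sym => /negPf ->.
    by apply: notin_spanning_tree tr _; rewrite orbC.
  have [f1 f2 f12 fT'] := hT f fT.
  rewrite !in_fset1U f1 f2 !orbT f12 (negPf fT') orbF.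
  by split => //; apply: contraTneq ev => <- /=; rewrite f1 f2.
- suff : connected_on (v |` S) (e |` T) by [].
  apply: (connected_on_hub (c := u)) => z; rewrite in_fset1U => /orP[/eqP ->|zS].
    by apply: reach_edge; case: he (adj_fset1U e T) => -> //=; rewrite adjC.
  apply: reach_sub (cT z u zS uS); apply: adj_sub; exact: fsubsetU1.
- have S0 : (0 < #|` S|)%N by rewrite (cardfsD1 u) uS.
  by rewrite !cardfsU1 eT vS nT /= !add1n prednK.
Qed.

Lemma spanning_subtree_grow X E S T : edges_in X E -> connected_on X E ->
  S `<=` X -> (0 < #|` S| < #|` X|)%N -> spanning_tree S T -> T `<=` E ->
  exists S' T', [/\ S' `<=` X, #|` S'| = (#|` S|).+1, spanning_tree S' T' & T' `<=` E].
Proof.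
move=> EX cE SX /andP[S0 SX_lt] tr TE.
have [s0 s0S] : exists s0, s0 \in S.
  by case: (fset_0Vmem S) => [S_0|[s0 ?]]; [rewrite S_0 cardfs0 in S0 | exists s0].
have [x xX xS] : exists2 x, x \in X & x \notin S.
  case: (fset_0Vmem (X `\` S)) => [/eqP|[x]]; last by rewrite inE => /andP[]; exists x.
  by rewrite fsetD_eq0 => /fsubset_leq_card; rewrite leqNgt SX_lt.
have [p [pth lst]] := cE s0 x (fsubsetP SX _ s0S) xX.
have [u [v [uv uS vS]]] : exists u v, [/\ adj E u v, u \in S & v \notin S].
  by apply: (path_crossing (P := mem S) pth s0S); rewrite lst.
have vX : v \in X by case/orP: uv => /EX [].
have [e [eE he]] : exists e, e \in E /\ (e = (u, v) \/ e = (v, u)).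
  by case/orP: uv => h; [exists (u, v); split; [|left] | exists (v, u); split; [|right]].
exists (v |` S), (e |` T); split.
- by rewrite fsubUset fsub1set vX SX.
- by rewrite cardfsU1 vS.
- exact: spanning_tree_extend tr uS vS he.
- by rewrite fsubUset fsub1set eE TE.
Qed.

Lemma exists_spanning_subtree X E : edges_in X E -> connected_on X E ->
  exists T, spanning_tree X T /\ T `<=` E.
Proof.
move=> EX cE; case: (fset_0Vmem X) => [->|[s0 s0X]].
  exists fset0; split; last exact: fsub0set.
  by split; [move=> e; rewrite inE | move=> p q; rewrite inE | rewrite !cardfs0].
have grow n : (n < #|` X|)%N -> exists S T,
    [/\ S `<=` X, #|` S| = n.+1, spanning_tree S T & T `<=` E].
  elim: n => [_|n IH ltn].
    exists [fset s0], fset0; split; rewrite ?cardfs1 ?fsub0set ?fsub1set //.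
    split; first by move=> e; rewrite inE.
      by move=> p q /fset1P -> /fset1P ->; apply: reach_refl.
    by rewrite cardfs0 cardfs1.
  have [S [T [SX cS tr TE]]] := IH (ltnW ltn).
  have [|S' [T' [S'X cS' tr' T'E]]] := spanning_subtree_grow EX cE SX _ tr TE.
    by rewrite cS.
  by exists S', T'; rewrite cS' cS.
have X0 : (0 < #|` X|)%N by rewrite (cardfsD1 s0) s0X.
have := grow (#|` X|).-1; rewrite ltn_predL X0 => /(_ isT) [S [T [SX cS tr TE]]].
suff SX_eq : S = X by exists T; rewrite -SX_eq.
by apply/eqP; rewrite eqEfcard SX cS prednK // leqnn.
Qed.

Definition minimal_spanning_tree X T := spanning_tree X T /\ tree_length T = MST X.

Lemma tree_length_ge0 E : 0 <= tree_length E.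
Proof. by apply: sumr_ge0 => e _; apply: edist_ge0. Qed.

Lemma tree_length_sub E E' : E `<=` E' -> tree_length E <= tree_length E'.
Proof.
move=> EE'; rewrite /tree_length.
have -> : \sum_(e <- E) edist e.1 e.2 =
    \sum_(e <- E) (if e \in E then edist e.1 e.2 else 0) by apply: eq_fbigr => e ->.
rewrite (big_fset_incl _ EE') => [|e _ /negPf -> //].
by apply: ler_sum => e _; case: ifP => // _; apply: edist_ge0.
Qed.

Lemma tree_length_fsetU1 e E : tree_length (e |` E) <= edist e.1 e.2 + tree_length E.
Proof.
case: (boolP (e \in E)) => eE; last by rewrite /tree_length big_fsetU1.
have -> : e |` E = E by apply/fsetUidPr; rewrite fsub1set.
by rewrite lerDr edist_ge0.
Qed.

Lemma tree_length_fsetU E E' : tree_length (E `|` E') <= tree_length E + tree_length E'.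
Proof.
rewrite /tree_length (big_fsetID _ (mem E)) /=.
have -> : [fset e in E `|` E' | e \in E] = E.
  by apply/fsetP => e; rewrite !inE /=; apply/idP/idP => [/andP[]|->].
apply: lerD => //; apply: tree_length_sub.
by apply/fsubsetP => e; rewrite !inE /= => /andP[/orP[->|->]].
Qed.

Lemma MST_le_tree X T : spanning_tree X T -> MST X <= tree_length T.
Proof.
move=> tr; apply: ge_inf; last by exists T.
by exists 0 => w [E [_ ->]]; apply: tree_length_ge0.
Qed.

Lemma MST_le_connected X E : edges_in X E -> connected_on X E -> MST X <= tree_length E.
Proof.
move=> EX cE; have [T [tr TE]] := exists_spanning_subtree EX cE.
exact: le_trans (MST_le_tree tr) (tree_length_sub TE).
Qed.

Lemma exists_minimal_spanning_tree X : exists T, minimal_spanning_tree X T.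
Proof.
have [T0 [tr0 _]] : exists T, spanning_tree X T /\ T `<=` X `*` X.
  apply: exists_spanning_subtree => [e|p q hp hq]; first by rewrite in_fsetM => /andP[].
  by apply: reach_edge; rewrite /adj in_fsetM hp hq.
pose C := [fset E in fpowerset (X `*` X) | `[< spanning_tree X E >]].
have inC E : spanning_tree X E -> E \in C.
  move=> tr; rewrite !inE /= fpowersetE (asboolT tr) andbT.
  by apply/fsubsetP => e /(spanning_tree_edges_in tr) [h1 h2]; rewrite in_fsetM h1 h2.
have [m mC hm] := exists_argmin_seq (@tree_length R d) (inC _ tr0).
have trm : spanning_tree X m by move: mC; rewrite !inE /= => /andP[_ /asboolP].
exists m; split => //; apply/le_anti/andP; split; last exact: MST_le_tree.
apply: lb_le_inf; first by exists (tree_length T0), T0.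
by move=> w [E [trE ->]]; apply/hm/inC.
Qed.

Lemma MST_ge0 X : 0 <= MST X.
Proof. by have [T [_ <-]] := exists_minimal_spanning_tree X; apply: tree_length_ge0. Qed.

Definition joins a b (e : V * V) := (e == (a, b)) || (e == (b, a)).

Definition remove_edge T a b := [fset e in T | ~~ joins a b e].

Lemma joinsC a b e : joins a b e = joins b a e.
Proof. by rewrite /joins orbC. Qed.

Lemma remove_edgeC T a b : remove_edge T a b = remove_edge T b a.
Proof. by apply/fsetP => e; rewrite !inE joinsC. Qed.

Lemma remove_edge_sub T a b : remove_edge T a b `<=` T.
Proof. by apply/fsubsetP => e; rewrite !inE /= => /andP[]. Qed.

Lemma adj_remove_edge T a b y v : adj T y v -> ~~ joins a b (y, v) ->
  adj (remove_edge T a b) y v.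
Proof.
move=> hyv hj; rewrite /adj !inE /=.
have -> : joins a b (v, y) = joins a b (y, v).
  by rewrite /joins !xpair_eqE orbC; congr orb; apply: andbC.
by rewrite hj !andbT.
Qed.

Lemma reach_remove_edge T a b y s : path (adj T) y s -> last y s = a ->
  reach (adj (remove_edge T a b)) y a \/ reach (adj (remove_edge T a b)) y b.
Proof.
elim: s y => [|v s IH] y /=; first by move=> _ ->; left; apply: reach_refl.
case/andP=> hyv hs /(IH _ hs) reach_v.
have [/orP[]/eqP[-> _]|hj] := boolP (joins a b (y, v)).
- by left; apply: reach_refl.
- by right; apply: reach_refl.
have e := reach_edge (adj_remove_edge hyv hj).
by case: reach_v => h; [left|right]; apply: reach_trans h.
Qed.

Lemma tree_length_remove_edge T a b : adj T a b ->
  tree_length (remove_edge T a b) + edist a b <= tree_length T.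
Proof.
move=> /orP hab.
have [e [eT je de]] : exists e, [/\ e \in T, joins a b e & edist e.1 e.2 = edist a b].
  case: hab => h; first by exists (a, b); rewrite /joins eqxx.
  by exists (b, a); rewrite /joins eqxx orbT edistC.
rewrite [leRHS]/tree_length (big_fsetD1 e eT) /= de [leLHS]addrC lerD2l.
apply: tree_length_sub; apply/fsubsetP => f; rewrite !inE /= => /andP[-> jf].
by rewrite andbT; apply: contraNneq jf => ->.
Qed.

Lemma MST_exchange X T a b w : minimal_spanning_tree X T -> adj T a b -> w \in X ->
  reach (adj (remove_edge T a b)) w a -> edist a b <= edist w b.
Proof.
move=> [tr opt] ab wX wa; have [aX bX] := spanning_tree_adj tr ab.
pose E := (w, b) |` remove_edge T a b.
have sub : subrel (adj (remove_edge T a b)) (adj E) by apply/adj_sub/fsubsetU1.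
have EX : edges_in X E.
  move=> e; rewrite in_fset1U => /orP[/eqP -> //|/(fsubsetP (remove_edge_sub T a b))].
  exact: spanning_tree_edges_in.
have cE : connected_on X E.
  apply: (connected_on_hub (c := a)) => z zX.
  have [s [pth lst]] := spanning_tree_connected tr zX aX.
  case: (reach_remove_edge b pth lst) => [/(reach_sub sub) //|zb].
  apply: reach_trans (reach_sub sub zb) _; apply: reach_trans (reach_sub sub wa).
  by apply: reach_edge; rewrite adjC (adj_fset1U (w, b)).
have := le_trans (MST_le_connected EX cE) (tree_length_fsetU1 _ _).
have := tree_length_remove_edge ab; rewrite -opt /=; lra.
Qed.

Lemma MST_edge_le_max X T a b w : minimal_spanning_tree X T -> adj T a b -> w \in X ->
  edist a b <= Num.max (edist w a) (edist w b).
Proof.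
move=> mst ab wX; have [aX _] := spanning_tree_adj mst.1 ab.
have [s [pth lst]] := spanning_tree_connected mst.1 wX aX.
case: (reach_remove_edge b pth lst) => h.
  by rewrite le_max (MST_exchange mst ab wX h) orbT.
rewrite remove_edgeC in h.
by rewrite le_max edistC (MST_exchange mst _ wX h) // adjC.
Qed.

Lemma MST_neighbor_angle X T p u1 u2 : minimal_spanning_tree X T ->
  adj T p u1 -> adj T p u2 -> u1 != u2 -> edist p u2 <= edist u1 u2.
Proof.
move=> mst h1 h2 ne; have [_ u1X] := spanning_tree_adj mst.1 h1.
apply: MST_exchange mst h2 u1X _; apply/reach_edge/adj_remove_edge; first by rewrite adjC.
rewrite /joins !xpair_eqE eqxx andbT (negPf ne) orbF.
by apply: contra ne => /andP[/eqP -> /eqP ->].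
Qed.

Lemma MST_add_point Y p L : 0 <= L ->
  (Y = fset0 \/ exists2 q, q \in Y & edist p q <= L) -> MST (p |` Y) <= MST Y + L.
Proof.
move=> L0 [->|[q qY pq]].
  have : MST [fset p] <= tree_length (fset0 : {fset V * V}).
    apply: MST_le_connected => [e|a b]; first by rewrite inE.
    by move=> /fset1P -> /fset1P ->; apply: reach_refl.
  rewrite fsetU0 /tree_length big_seq_fset0 => h.
  by apply: le_trans h _; rewrite addr_ge0 // MST_ge0.
have [T [tr opt]] := exists_minimal_spanning_tree Y.
pose E := (p, q) |` T.
have EX : edges_in (p |` Y) E.
  move=> e; rewrite /E in_fset1U => /orP[/eqP -> /=|/(spanning_tree_edges_in tr) [h1 h2]].
    by rewrite !in_fset1U eqxx qY orbT.
  by rewrite !in_fset1U h1 h2 !orbT.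
have cE : connected_on (p |` Y) E.
  apply: (connected_on_hub (c := q)) => z; rewrite in_fset1U => /orP[/eqP ->|zY].
    exact/reach_edge/(adj_fset1U (p, q)).
  by apply: reach_sub (spanning_tree_connected tr zY qY); apply/adj_sub/fsubsetU1.
have := le_trans (MST_le_connected EX cE) (tree_length_fsetU1 _ _).
by rewrite -opt /=; lra.
Qed.

Definition neighbors T p := [fset u in [fset e.1 | e in T] `|` [fset e.2 | e in T] | adj T p u].

Lemma in_neighbors T p u : (u \in neighbors T p) = adj T p u.
Proof.
rewrite !inE /= andb_idl // => /orP[] h; apply/orP; [right|left]; apply/imfsetP.
  by exists (p, u).
by exists (u, p).
Qed.

Definition delete_vertex T p := [fset e in T | (e.1 != p) && (e.2 != p)].

Lemma delete_vertex_sub T p : delete_vertex T p `<=` T.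
Proof. by apply/fsubsetP => e; rewrite !inE => /andP[]. Qed.

Section DeleteVertex.
Variables (Y : {fset V}) (T : {fset V * V}) (p : V).
Hypotheses (pY : p \notin Y) (tr : spanning_tree (p |` Y) T).

Lemma edges_in_delete_vertex : edges_in Y (delete_vertex T p).
Proof.
move=> e; rewrite !inE /= => /andP[/(spanning_tree_edges_in tr) [] + + /andP[e1 e2]].
by rewrite !in_fset1U (negPf e1) (negPf e2).
Qed.

Lemma neighbors_sub : {subset neighbors T p <= Y}.
Proof.
move=> u; rewrite in_neighbors => pu; have [_] := spanning_tree_adj tr pu.
by rewrite in_fset1U eq_sym (negPf (spanning_tree_adj_neq tr pu)).
Qed.

Lemma reach_neighbor_delete_vertex y : y \in Y ->
  exists2 u, u \in neighbors T p & reach (adj (delete_vertex T p)) y u.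
Proof.
move=> yY; have yp : y != p by apply: contraNneq pY => <-.
have [s [pth lst]] := spanning_tree_connected tr (fset1Ur p yY) (fset1U1 p Y).
have [u [up hu]] := reach_before pth lst yp.
exists u; first by rewrite in_neighbors adjC.
apply: reach_sub hu => a b /and3P[hab ha hb].
by move: hab; rewrite /adj !inE /= ha hb !andbT.
Qed.

End DeleteVertex.

Lemma tree_length_star (N : {fset V}) u0 L : {in N, forall u, edist u u0 <= L} ->
  tree_length [fset (u, u0) | u in N] <= #|` N|%:R * L.
Proof.
move=> HL; rewrite /tree_length big_imfset /=; last by move=> a b _ _ [].
apply: le_trans (_ : \sum_(u <- N) L <= _).
  by rewrite big_seq [leRHS]big_seq; apply: ler_sum => u uN; apply: HL.
by rewrite big_const_seq count_predT iter_addr_0 mulr_natl.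
Qed.

(* Deleting [p] leaves pieces of the tree each containing a neighbour of [p];
   a star centred at one neighbour reconnects them. *)
Lemma MST_remove_point Y T p L : p \notin Y -> minimal_spanning_tree (p |` Y) T ->
  0 <= L -> {in neighbors T p &, forall u v, edist u v <= L} ->
  MST Y <= MST (p |` Y) + #|` neighbors T p|%:R * L.
Proof.
move=> pY [tr opt] L0 HL; have reachN := reach_neighbor_delete_vertex pY tr.
set N := neighbors T p in reachN *; set Tp := delete_vertex T p in reachN *.
have lenTp : tree_length Tp <= MST (p |` Y) by rewrite -opt tree_length_sub ?delete_vertex_sub.
have NL : 0 <= #|` N|%:R * L by rewrite mulr_ge0.
case: (fset_0Vmem N) => [N0|[u0 u0N]].
  have cTp : connected_on Y Tp by move=> a b /reachN [u]; rewrite N0 inE.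
  by have := MST_le_connected (edges_in_delete_vertex tr) cTp; lra.
pose St := [fset (u, u0) | u in N].
have EY : edges_in Y (Tp `|` St).
  move=> e; rewrite in_fsetU => /orP[/(edges_in_delete_vertex tr) //|].
  by case/imfsetP => u uN ->; split; apply: (neighbors_sub tr).
have cE : connected_on Y (Tp `|` St).
  apply: (connected_on_hub (c := u0)) => z /reachN [u uN hu].
  apply: reach_trans (reach_sub (adj_sub (fsubsetUl _ _)) hu) _.
  apply/reach_edge/(adj_sub (fsubsetUr Tp St)); apply/orP; left.
  by apply/imfsetP; exists u.
have lenSt := tree_length_star (fun u uN => HL u u0 uN u0N).
have := le_trans (MST_le_connected EY cE) (tree_length_fsetU Tp St); lra.
Qed.

End SpanningTree.

Lemma sumr_sqrB (R : comPzRingType) n (a b : 'I_n -> R) (s t : R) :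
  \sum_i (s * a i - t * b i) ^+ 2 =
  s ^+ 2 * \sum_i a i ^+ 2 + t ^+ 2 * \sum_i b i ^+ 2 - 2 * s * t * \sum_i a i * b i.
Proof. by rewrite !mulr_sumr -big_split -sumrB /=; apply: eq_bigr => i _; ring. Qed.

Definition MST_degree_bound (d : nat) := ((2 * d.+1).+1 ^ d)%N.

Section Packing.
Variables (R : realType) (d : nat).
Local Notation V := 'rV[R]_d.
Local Notation m := (d.+1%:R : R).
Implicit Types (p u : V).

Definition direction p u i := (u ord0 i - p ord0 i) / edist p u.

(* The longest side of the triangle [p u1 u2] is [u1 u2], so the angle at [p] is at
   least 60 degrees. *)
Lemma direction_far p u1 u2 : p != u1 -> p != u2 ->
  edist p u1 <= edist u1 u2 -> edist p u2 <= edist u1 u2 ->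
  1 <= \sum_i (direction p u1 i - direction p u2 i) ^+ 2.
Proof.
move=> pu1 pu2 h1 h2; set r1 := edist p u1 in h1 *; set r2 := edist p u2 in h2 *.
have r1_gt0 : 0 < r1 := edist_gt0 pu1; have r2_gt0 : 0 < r2 := edist_gt0 pu2.
pose a i := u1 ord0 i - p ord0 i; pose b i := u2 ord0 i - p ord0 i.
have Ea : \sum_i a i ^+ 2 = r1 ^+ 2 by rewrite /r1 edistC edist_sqr.
have Eb : \sum_i b i ^+ 2 = r2 ^+ 2 by rewrite /r2 edistC edist_sqr.
set C := \sum_i a i * b i.
have ED : edist u1 u2 ^+ 2 = r1 ^+ 2 + r2 ^+ 2 - 2 * C.
  rewrite edist_sqr (eq_bigr (fun i => (1 * a i - 1 * b i) ^+ 2)) => [|i _].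
    by rewrite sumr_sqrB Ea Eb -/C; ring.
  by rewrite /a /b; ring.
have -> : \sum_i (direction p u1 i - direction p u2 i) ^+ 2 =
    r1^-1 ^+ 2 * r1 ^+ 2 + r2^-1 ^+ 2 * r2 ^+ 2 - 2 * r1^-1 * r2^-1 * C.
  rewrite (eq_bigr (fun i => (r1^-1 * a i - r2^-1 * b i) ^+ 2)) => [|i _].
    by rewrite sumr_sqrB Ea Eb -/C.
  by rewrite /direction -/r1 -/r2 (mulrC (_ - _) r1^-1) (mulrC (_ - _) r2^-1).
have C_le : 2 * C <= r1 * r2.
  have D0 := edist_ge0 u1 u2.
  have : r1 ^+ 2 <= edist u1 u2 ^+ 2 by rewrite ler_sqr ?nnegrE ?edist_ge0.
  have : r2 ^+ 2 <= edist u1 u2 ^+ 2 by rewrite ler_sqr ?nnegrE ?edist_ge0.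
  rewrite ED; case: (leP r1 r2) => ?; nra.
have x1 : r1^-1 * r1 = 1 by rewrite mulVf ?gt_eqF.
have x2 : r2^-1 * r2 = 1 by rewrite mulVf ?gt_eqF.
have : 0 < r1^-1 * r2^-1 by rewrite mulr_gt0 ?invr_gt0.
have -> : r1^-1 ^+ 2 * r1 ^+ 2 = 1 by rewrite -exprMn x1 expr1n.
have -> : r2^-1 ^+ 2 * r2 ^+ 2 = 1 by rewrite -exprMn x2 expr1n.
nra.
Qed.

Lemma direction_norm_le1 p u i : p != u -> `|direction p u i| <= 1.
Proof.
move=> pu; rewrite normrM normfV (gtr0_norm (edist_gt0 pu)) ler_pdivrMr ?edist_gt0 //.
by rewrite mul1r edistC coord_le_edist.
Qed.

(* Two directions in the same cell differ by at most [1/m] in each coordinate, hence by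
   less than 1 in Euclidean norm as [d < m ^ 2]: this contradicts [direction_far]. *)
Definition cell p u : {ffun 'I_d -> 'I_(2 * d.+1).+1} :=
  [ffun i => inord (Num.truncn (m * direction p u i + m))].

Lemma cell_truncn p u i : p != u ->
  0 <= m * direction p u i + m /\ cell p u i = Num.truncn (m * direction p u i + m) :> nat.
Proof.
move=> pu; have := direction_norm_le1 i pu; rewrite ler_norml => /andP[lo hi].
have m0 : (0 : R) < m by rewrite ltr0n.
have x0 : 0 <= m * direction p u i + m by nra.
split => //; rewrite ffunE inordK // ltnS truncn_le_nat.
have -> : (2 * d.+1).+1%:R = (2 : R) * m + 1 by rewrite -natr1 natrM.
nra.
Qed.

Lemma cell_eq_direction p u1 u2 i : p != u1 -> p != u2 -> cell p u1 = cell p u2 ->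
  (m * (direction p u1 i - direction p u2 i)) ^+ 2 <= 1.
Proof.
move=> pu1 pu2 same; have [x0 c1] := cell_truncn i pu1; have [y0 c2] := cell_truncn i pu2.
move: (truncn_itv x0) (truncn_itv y0); rewrite -c1 -c2 same.
set x := m * _ + m; set y := m * _ + m; set k := nat_of_ord _; rewrite -natr1.
have -> : m * (direction p u1 i - direction p u2 i) = x - y by rewrite /x /y; ring.
move=> /andP[? ?] /andP[? ?]; rewrite -real_normK ?num_real // exprn_ile1 ?normr_ge0 //.
by rewrite ler_norml; apply/andP; split; lra.
Qed.

Lemma card_le_of_angles p (S : {fset V}) : p \notin S ->
  {in S &, forall u1 u2, u1 != u2 -> edist p u2 <= edist u1 u2} ->
  (#|` S| <= MST_degree_bound d)%N.
Proof.
move=> pS angle.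
have inj : {in S &, injective (cell p)}.
  move=> u1 u2 h1 h2 same; apply/eqP/negPn/negP => ne.
  have pu1 : p != u1 by apply: contraNneq pS => ->.
  have pu2 : p != u2 by apply: contraNneq pS => ->.
  have h12 : edist p u1 <= edist u1 u2 by rewrite [edist u1 u2]edistC (angle _ _ h2 h1) // eq_sym.
  have far := direction_far pu1 pu2 h12 (angle _ _ h1 h2 ne).
  have close : m ^+ 2 * \sum_i (direction p u1 i - direction p u2 i) ^+ 2 <= d%:R.
    rewrite mulr_sumr; apply: le_trans (_ : \sum_(i < d) (1 : R) <= _).
      by apply: ler_sum => i _; rewrite -exprMn; apply: cell_eq_direction.
    by rewrite sumr_const card_ord.
  have : (d%:R : R) < m ^+ 2 by rewrite -natrX ltr_nat; nia.
  have := sqr_ge0 m; nra.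
rewrite -(size_map (cell p)) -(card_uniqP _); last by rewrite map_inj_in_uniq // fset_uniq.
by apply: leq_trans (max_card _) _; rewrite card_ffun !card_ord.
Qed.

End Packing.

Section MSTDegree.
Variables (R : realType) (d : nat).
Local Notation V := 'rV[R]_d.
Local Open Scope fset_scope.
Local Open Scope ring_scope.

Lemma MST_card_neighbors (X : {fset V}) T p : minimal_spanning_tree X T ->
  (#|` neighbors T p| <= MST_degree_bound d)%N.
Proof.
move=> mst; apply: card_le_of_angles => [|u1 u2].
  by rewrite in_neighbors; apply/negP => /(spanning_tree_adj_neq mst.1)/eqP; apply.
by rewrite !in_neighbors => h1 h2; apply: MST_neighbor_angle mst h1 h2.
Qed.



Lemma MST_insert_point_dist (Y : {fset V}) p L : p \notin Y -> 0 <= L ->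
  (Y = fset0 \/ exists2 q, q \in Y & edist p q <= L) ->
  (forall T, minimal_spanning_tree (p |` Y) T ->
     {in neighbors T p &, forall u v, edist u v <= L}) ->
  `|MST (p |` Y) - MST Y| <= ((MST_degree_bound d)%:R + 1) * L.
Proof.
move=> pY L0 near nbr; have [T mst] := exists_minimal_spanning_tree (p |` Y).
have add := MST_add_point L0 near.
have rem := MST_remove_point pY mst L0 (nbr T mst).
have deg : #|` neighbors T p|%:R * L <= (MST_degree_bound d)%:R * L.
  by rewrite ler_wpM2r // ler_nat (MST_card_neighbors p mst).
have NL : 0 <= (MST_degree_bound d)%:R * L by rewrite mulr_ge0.
rewrite mulrDl mul1r ler_norml; apply/andP; split; lra.
Qed.

End MSTDegree.

Section Telescope.
Local Open Scope fset_scope.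
Local Open Scope ring_scope.

Lemma norm_sub_fsetU_le (T : choiceType) (R : numDomainType) (f : {fset T} -> R)
    (A B : {fset T}) (K : R) : 0 <= K ->
  (forall Y p, (B `<=` Y)%fset -> (Y `<=` A `|` B)%fset -> p \in A -> p \notin Y ->
     `|f (p |` Y)%fset - f Y| <= K) ->
  `|f (A `|` B)%fset - f B| <= #|` A|%:R * K.
Proof.
move=> K0; elim/fset1U_rect: A => [_|p A pA IH step]; rewrite /=.
  by rewrite fset0U subrr normr0 mulr_ge0.
have {}IH : `|f (A `|` B) - f B| <= #|` A|%:R * K.
  apply: IH => Y q BY YAB qA; apply: step => //; last exact: fset1Ur.
  by apply: fsubset_trans YAB _; rewrite fsetSU // fsubsetU1.
rewrite cardfsU1 pA add1n -natr1 mulrDl mul1r -fsetUA.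
have [pAB|pAB] := boolP (p \in A `|` B).
  have -> : p |` (A `|` B) = A `|` B by apply/fsetUidPr; rewrite fsub1set.
  by rewrite ler_wpDr.
apply: le_trans (_ : `|f (p |` (A `|` B)) - f (A `|` B)| + `|f (A `|` B) - f B| <= _).
  have -> : f (p |` (A `|` B)) - f B =
      (f (p |` (A `|` B)) - f (A `|` B)) + (f (A `|` B) - f B) by rewrite addrA subrK.
  exact: ler_normD.
rewrite addrC lerD //; apply: step => //; first exact: fsubsetUr.
  by rewrite fsetSU // fsubsetU1.
exact: fset1U1.
Qed.

End Telescope.

Section Wall.
Variables (R : realType) (d : nat).
Local Notation V := 'rV[R]_d.
Implicit Types (p u w x y : V).

Lemma contains_wall_sub (W W' K : set V) x (a b : R) :
  W `<=` W' -> contains_wall W K x a b -> contains_wall W' K x a b.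
Proof.
move=> WW' wall p1 p2 h1 h2; have [w [[[[Kw Ww] e1] e2] ann]] := wall p1 p2 h1 h2.
by exists w; split => //; split => //; split => //; split => //; apply: WW'.
Qed.

Lemma seg_detour p u w (t1 t2 : R) : p != u -> 0 <= t1 -> t1 < t2 -> t2 <= 1 ->
  let r := 3 / 4 * edist (seg p u t1) (seg p u t2) in
  edist (seg p u t1) w <= r -> edist (seg p u t2) w <= r ->
  edist w p < edist p u /\ edist w u < edist p u.
Proof.
move=> pu t1_ge0 t12 t2_le1 r h1 h2; have L0 := edist_gt0 pu.
have d12 : edist (seg p u t1) (seg p u t2) = (t2 - t1) * edist p u.
  by rewrite edist_seg distrC ger0_norm // subr_ge0 ltW.
have dp1 : edist p (seg p u t1) = t1 * edist p u.
  by rewrite -{1}(seg0 p u) edist_seg sub0r normrN ger0_norm.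
have d2u : edist (seg p u t2) u = (1 - t2) * edist p u.
  by rewrite -{2}(seg1 p u) edist_seg distrC ger0_norm // subr_ge0.
rewrite /r d12 in h1 h2; split.
  rewrite edistC; apply: le_lt_trans (edist_triangle _ (seg p u t1) _) _; rewrite dp1; nra.
apply: le_lt_trans (edist_triangle _ (seg p u t2) _) _; rewrite edistC d2u; nra.
Qed.

(* An edge from [B(x,a)] to a point outside [B(x,b)] crosses the wall, and a wall point
   near the crossing is closer to both endpoints than they are to each other. *)
Lemma wall_MST_neighbor (X : {fset V}) T x y (a b s : R) p u : a < b ->
  cube x a `<=` cube y s -> contains_wall [set q | q \in X] (cube y s) x a b ->
  (forall q, q \in X -> cube y s q) -> minimal_spanning_tree X T ->
  cube x a p -> adj T p u -> cube x b u.
Proof.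
move=> ab Kxa wall XK mst pa pu; rewrite /cube /= leNgt; apply/negP => ub.
have [pX uX] := spanning_tree_adj mst.1 pu.
have [t2 [t2_ge0 t2_le1 p2b]] : exists t, [/\ 0 <= t, t <= 1 & cube_bd x b (seg p u t)].
  apply: seg_cross_cube_bd ler01 _; rewrite seg0 seg1 (ltW ub) andbT.
  exact: le_trans pa (ltW ab).
have [t1 [t1_ge0 t12 p1a]] : exists t, [/\ 0 <= t, t <= t2 & cube_bd x a (seg p u t)].
  by apply: seg_cross_cube_bd t2_ge0 _; rewrite seg0 pa p2b ltW.
have t12' : t1 < t2.
  rewrite lt_neqAle t12 andbT; apply: contraTneq ab => t12e.
  by move: p1a; rewrite t12e /cube_bd /= p2b => ->; rewrite ltxx.
have p2K : cube y s (seg p u t2) by apply: cube_seg (Kxa _ pa) (XK _ uX) _; rewrite t2_ge0.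
have [w [[[[_ wX] e1] e2] _]] := wall _ _ p1a (conj p2K p2b).
have pu_neq : p != u by apply: contraTneq ub => <-; rewrite -leNgt (le_trans pa (ltW ab)).
have [hp hu] := seg_detour pu_neq t1_ge0 t12' t2_le1 e1 e2.
by have := MST_edge_le_max mst pu wX; rewrite leNgt gt_max hp hu.
Qed.

Local Notation N := (MST_degree_bound d)%:R.

Lemma MST_insert_wall (A B : {fset V}) x y (a b s : R) : 0 < a -> a < b ->
  cube x a `<=` cube y s -> (cube y s `&` cube_bd x b) !=set0 ->
  (forall p, p \in A -> cube x a p) -> (forall p, p \in B -> cube y s p) ->
  contains_wall [set p | p \in B] (cube y s) x a b ->
  `|MST (A `|` B)%fset - MST B| <= #|` A|%:R * ((N + 1) * (d%:R * (2 * b))).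
Proof.
move=> a0 ab Kxa [z [zK zb]] HA HB wall.
have L0 : 0 <= d%:R * (2 * b) by rewrite !mulr_ge0 ?ler0n // ltW // (lt_trans a0).
have [w wB wb] : exists2 w, w \in B & cube x b w.
  have [t [_ _ ta]] : exists t, [/\ 0 <= t, t <= 1 & cube_bd x a (seg x z t)].
    by apply: seg_cross_cube_bd ler01 _; rewrite seg0 seg1 supdist_xx zb ltW // ltW.
  by have [w [[[[_ wB] _] _] [wb _]]] := wall _ _ ta (conj zK zb); exists w.
apply: norm_sub_fsetU_le => [|Y p BY YAB pA pY]; first by rewrite mulr_ge0 ?addr_ge0.
have pb : cube x b p by apply: le_trans (HA p pA) (ltW ab).
apply: MST_insert_point_dist => // [|T mst u v].
  by right; exists w; [apply: (fsubsetP BY) | apply: cube_edist pb wb].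
rewrite !in_neighbors => pu pv.
have XK q : q \in (p |` Y)%fset -> cube y s q.
  rewrite in_fset1U => /orP[/eqP ->|/(fsubsetP YAB)]; first exact/Kxa/HA.
  by rewrite in_fsetU => /orP[/HA/Kxa|/HB].
have wallX : contains_wall [set q | q \in (p |` Y)%fset] (cube y s) x a b.
  apply: contains_wall_sub wall => q /= /(fsubsetP BY) qY; exact: fset1Ur.
by apply: cube_edist; apply: wall_MST_neighbor Kxa wallX XK mst (HA p pA) _.
Qed.

Lemma MST_insert_cube (A B : {fset V}) y (s : R) : 0 <= s ->
  (forall p, p \in (A `|` B)%fset -> cube y s p) ->
  `|MST (A `|` B)%fset - MST B| <= #|` A|%:R * ((N + 1) * diameter (cube y s)).
Proof.
move=> s0 HK; have D0 : 0 <= diameter (cube y s).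
  by apply: (diameter_ge0 (p := y)); rewrite /cube /= supdist_xx.
apply: norm_sub_fsetU_le => [|Y p BY YAB pA pY]; first by rewrite mulr_ge0 ?addr_ge0.
have YK q : q \in Y -> cube y s q by move=> /(fsubsetP YAB); apply: HK.
have pK : cube y s p by apply: HK; rewrite in_fsetU pA.
apply: MST_insert_point_dist => // [|T mst u v].
  have [->|[q qY]] := fset_0Vmem Y; [by left | right].
  by exists q => //; apply: edist_le_diameter (YK q qY).
rewrite !in_neighbors => pu pv.
have [_ ] := spanning_tree_adj mst.1 pu; have [_ ] := spanning_tree_adj mst.1 pv.
by rewrite !in_fset1U => /orP[/eqP ->|/YK ?] /orP[/eqP ->|/YK ?]; apply: edist_le_diameter.
Qed.

End Wall.

Theorem lemma7p5 (R : realType) (d : nat) :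
  exists c : R, forall (a b : R) (x y : 'rV[R]_d) (s : R)
    (A B : {fset 'rV[R]_d}),
    0 < a -> a < b ->
    cube x a `<=` cube y s ->
    (cube y s `&` cube_bd x b) !=set0 ->
    (forall p, p \in A -> cube x a p) ->
    (forall p, p \in B -> (cube y s `\` cube x a) p) ->
    (contains_wall [set p | p \in B] (cube y s) x a b ->
       `|MST (A `|` B)%fset - MST B| <= c * (#|` A|)%:R * b) /\
    (~ contains_wall [set p | p \in B] (cube y s) x a b ->
       `|MST (A `|` B)%fset - MST B| <= c * (#|` A|)%:R * diameter (cube y s)).
Proof.
pose N : R := (MST_degree_bound d)%:R.
exists (2 * d.+1%:R * (N + 1)) => a b x y s A B a0 ab Kxa Kb HA HB.
have [z [zK _]] := Kb.
have s0 : 0 <= s := le_trans (supdist_ge0 y z) zK.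
have HB' p : p \in B -> cube y s p by move=> /HB [].
have HK p : p \in (A `|` B)%fset -> cube y s p.
  by rewrite in_fsetU => /orP[/HA/Kxa|/HB'].
have k0 : 0 <= #|` A|%:R :> R := ler0n _ _.
have N0 : 0 <= N + 1 by rewrite addr_ge0 ?ler0n.
have dR : (d%:R : R) <= d.+1%:R by rewrite ler_nat.
split => [wall|_].
  apply: le_trans (MST_insert_wall a0 ab Kxa Kb HA HB' wall) _.
  have b0 : 0 <= b by rewrite ltW // (lt_trans a0).
  rewrite [leLHS](_ : _ = #|` A|%:R * (N + 1) * b * (2 * d%:R)); last by ring.
  rewrite [leRHS](_ : _ = #|` A|%:R * (N + 1) * b * (2 * d.+1%:R)); last by ring.
  by apply: ler_wpM2l; [rewrite !mulr_ge0 | lra].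
have D0 : 0 <= diameter (cube y s) by apply: (diameter_ge0 zK).
apply: le_trans (MST_insert_cube s0 HK) _.
rewrite [leLHS](_ : _ = #|` A|%:R * (N + 1) * diameter (cube y s) * 1); last by ring.
rewrite [leRHS](_ : _ = #|` A|%:R * (N + 1) * diameter (cube y s) * (2 * d.+1%:R)); last by ring.
apply: ler_wpM2l; first by rewrite !mulr_ge0.
have : (1 : R) <= d.+1%:R by rewrite ler1n.
lra.
Qed.
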